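(* Let $H=(V,E)$ be a graph, $t\ge 1$ an integer, and let $E_1,\dots,E_s\subseteq E$ be sets of edges each of size at most $t$, such that for every $1\le i<j\le s$ the graph $(V,E\setminus(E_i\cup E_j))$ is disconnected. If $s>(2^t+1)2^{t-1}$, then $m(H)\le 2^t$.
   Context: All graphs are finite and simple. For graphs $G_1=(V,E_1)$, $G_2=(V,E_2)$ on the same vertex set, their symmetric difference is the graph $(V,E_1\oplus E_2)$, where $E_1\oplus E_2$ is the set of edges belonging to exactly one of $E_1,E_2$. For a graph $H=(V,E)$, a spanning subgraph of $H$ is a graph $(V,E')$ with $E'\subseteq E$. A connectivity code for $H$ is a collection $\mathcal G$ of distinct spanning subgraphs of $H$ such that the symmetric difference of any two distinct members of $\mathcal G$ is a connected graph on the vertex set $V$. $m(H)$ denotes the maximum cardinality of a connectivity code for $H$. *)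

From mathcomp Require Import all_boot.
Set Implicit Arguments. Unset Strict Implicit. Unset Printing Implicit Defensive.

(* A finite simple graph on vertex set T (a finType) is given by its edge set
   E : {set {set T}}, each edge being a 2-element subset of T. *)
Definition simple_edges (T : finType) (E : {set {set T}}) : Prop :=
  forall e, e \in E -> #|e| = 2.

Definition adj (T : finType) (E : {set {set T}}) : rel T :=
  fun x y => (x != y) && ([set x; y] \in E).

Definition connected_graph (T : finType) (E : {set {set T}}) : Prop :=
  forall x y : T, connect (adj E) x y.

Definition symdiff (T : finType) (E1 E2 : {set {set T}}) : {set {set T}} :=
  (E1 :\: E2) :|: (E2 :\: E1).

Definition conn_code (T : finType) (E : {set {set T}})
    (C : {set {set {set T}}}) : bool :=
  [forall F in C, F \subset E] &&
  [forall F1 in C, forall F2 in C,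
     (F1 != F2) ==> [forall x, forall y, connect (adj (symdiff F1 F2)) x y]].

Definition mcode (T : finType) (E : {set {set T}}) : nat :=
  \max_(C : {set {set {set T}}} | conn_code E C) #|C|.

From mathcomp Require Import all_boot.
Set Implicit Arguments. Unset Strict Implicit. Unset Printing Implicit Defensive.

(* Let C be a connectivity code for H = (T, E) and suppose
   #|C| > 2^t; fix a subfamily C' of C with exactly 2^t + 1 members.
   - For every i, the traces F :&: Es i of the members F of C' live in
     the power set of Es i, which has at most 2^t elements; by pigeonhole two
     distinct members of C' agree on Es i.  Choose such a pair P i.
   - There are only 'C(2^t + 1, 2) = (2^t + 1) * 2^(t-1) < s pairs in C', so
     by pigeonhole again P i = P j = {F1, F2} for some i < j.
   - F1 and F2 agree on Es i :|: Es j, so their symmetric difference is a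
     subgraph of E :\: (Es i :|: Es j); it is connected because C is a code,
     hence so is E :\: (Es i :|: Es j), contradicting the hypothesis. *)

Section CodeGraphs.
Variable T : finType.
Implicit Types E A : {set {set T}}.

Lemma connect_adj_subset (E1 E2 : {set {set T}}) (x y : T) :
  E1 \subset E2 -> connect (adj E1) x y -> connect (adj E2) x y.
Proof.
move=> sE12; apply: connect_sub => u v /andP[neq_uv uv_E1].
by apply: connect1; rewrite /adj neq_uv (subsetP sE12).
Qed.

Lemma symdiff_sub_setD E A (F1 F2 : {set {set T}}) :
  F1 \subset E -> F2 \subset E -> F1 :&: A = F2 :&: A ->
  symdiff F1 F2 \subset E :\: A.
Proof.
move=> sF1E sF2E agree; apply/subsetP => e.
have trace_eq : e \in A -> (e \in F1) = (e \in F2).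
  by move=> eA; move/setP/(_ e): agree; rewrite !inE eA !andbT.
rewrite /symdiff !inE => /orP[] /andP[e_nF e_F]; apply/andP; split.
- by apply: contra e_nF => /trace_eq <-.
- exact: (subsetP sF1E).
- by apply: contra e_nF => /trace_eq ->.
- exact: (subsetP sF2E).
Qed.

Lemma code_agree_connected E A (C : {set {set {set T}}})
    (F1 F2 : {set {set T}}) :
  conn_code E C -> F1 \in C -> F2 \in C -> F1 != F2 ->
  F1 :&: A = F2 :&: A -> connected_graph (E :\: A).
Proof.
case/andP=> /forall_inP sub_E /forall_inP code_conn F1C F2C neq12 agree x y.
apply: (connect_adj_subset (symdiff_sub_setD (sub_E _ F1C) (sub_E _ F2C) agree)).
by move: (code_conn _ F1C) => /forall_inP/(_ _ F2C); rewrite neq12 =>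
  /forallP/(_ x)/forallP/(_ y).
Qed.

End CodeGraphs.

Lemma set_pigeonhole (U V : finType) (f : U -> V) (S : {set U}) (D : {set V}) :
  f @: S \subset D -> #|D| < #|S| ->
  exists x y, [/\ x \in S, y \in S, x != y & f x = f y].
Proof.
move=> sfSD ltDS.
have : ~~ [forall x in S, forall y in S, (f x == f y) ==> (x == y)].
  apply: contraL ltDS => /forall_inP injf; rewrite -leqNgt.
  have /imset_injP/eqP <- : {in S &, injective f}.
    move=> x y xS yS fxy; apply/eqP.
    by move/forall_inP/(_ _ yS)/implyP: (injf _ xS); apply; rewrite fxy.
  exact: subset_leq_card.
rewrite negb_forall_in => /exists_inP[x xS].
rewrite negb_forall_in => /exists_inP[y yS].
by rewrite negb_imply => /andP[/eqP fxy neq_xy]; exists x, y.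
Qed.

Lemma subset_of_card (U : finType) (S : {set U}) k :
  k <= #|S| -> exists2 S' : {set U}, S' \subset S & #|S'| = k.
Proof.
rewrite -bin_gt0 -(cards_draws S) => /card_gt0P[S'].
by rewrite inE => /andP[sS'S /eqP cardS']; exists S'.
Qed.

Lemma bin2_pow2S t : 1 <= t -> 'C((2 ^ t).+1, 2) = (2 ^ t + 1) * 2 ^ (t - 1).
Proof.
case: t => // t _; rewrite bin2 /= subn1 /= addn1 expnS.
by rewrite mulnCA mul2n doubleK.
Qed.

Lemma ord_pigeonhole (V : finType) s (f : 'I_s -> V) (D : {set V}) :
  (forall i, f i \in D) -> #|D| < s ->
  exists i j : 'I_s, i < j /\ f i = f j.
Proof.
move=> fD ltDs.
have sub_D : f @: [set: 'I_s] \subset D by apply/subsetP => _ /imsetP[i _ ->].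
have [i [j [_ _ neq_ij eq_f]]] :
  exists i j, [/\ i \in [set: 'I_s], j \in [set: 'I_s], i != j & f i = f j].
  by apply: set_pigeonhole sub_D _; rewrite cardsT card_ord.
case: (ltngtP i j) => [lt_ij|lt_ji|/val_inj eq_ij]; first by exists i, j.
- by exists j, i.
- by rewrite eq_ij eqxx in neq_ij.
Qed.

Section Traces.
Variable T : finType.
Implicit Types A : {set {set T}}.
Implicit Types S P : {set {set {set T}}}.

Definition agree_on A P : bool :=
  [forall F1 in P, forall F2 in P, F1 :&: A == F2 :&: A].

Definition pairs_of S : {set {set {set {set T}}}} :=
  [set P : {set {set {set T}}} | P \subset S & #|P| == 2].

Lemma agree_on_pair A F1 F2 :
  agree_on A [set F1; F2] -> F1 :&: A = F2 :&: A.
Proof. by move/forall_inP/(_ F1 (set21 _ _))/forall_inP/(_ F2 (set22 _ _))/eqP. Qed.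

Lemma agreeing_pair_exists A S :
  2 ^ #|A| < #|S| -> exists2 P, P \in pairs_of S & agree_on A P.
Proof.
move=> few_traces.
have traces_sub : (fun F => F :&: A) @: S \subset powerset A.
  by apply/subsetP => _ /imsetP[F _ ->]; rewrite powersetE subsetIr.
rewrite -card_powerset in few_traces.
have [F1 [F2 [F1S F2S neq12 agree]]] := set_pigeonhole traces_sub few_traces.
exists [set F1; F2].
  by rewrite inE cards2 neq12 andbT; apply/subsetP => F /set2P[] ->.
by apply/forall_inP => G1 /set2P[]-> ; apply/forall_inP => G2 /set2P[]->;
   rewrite ?agree.
Qed.

End Traces.

Lemma conn_code_card_le (T : finType) (E : {set {set T}}) (t s : nat)
    (Es : 'I_s -> {set {set T}}) (C : {set {set {set T}}}) :
  1 <= t ->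
  (forall i, #|Es i| <= t) ->
  (forall i j : 'I_s, i < j -> ~ connected_graph (E :\: (Es i :|: Es j))) ->
  (2 ^ t + 1) * 2 ^ (t - 1) < s ->
  conn_code E C -> #|C| <= 2 ^ t.
Proof.
move=> t_ge1 small_Es disconnected s_large codeC; rewrite leqNgt.
apply/negP => /subset_of_card[C' sC'C cardC'].
have pair_exists i : exists2 P, P \in pairs_of C' & agree_on (Es i) P.
  by apply: agreeing_pair_exists; rewrite cardC' ltnS leq_pexp2l.
have [P P_pairs P_agree] := fin_all_exists2 pair_exists.
have few_pairs : #|pairs_of C'| < s by rewrite cards_draws cardC' bin2_pow2S.
have [i [j [lt_ij eq_P]]] := ord_pigeonhole P_pairs few_pairs.
have /setIdP[sPC' /cards2P[F1 [F2 [neq12 def_P]]]] := P_pairs i.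
have agree_i := P_agree i; have agree_j := P_agree j.
rewrite -eq_P def_P in agree_j; rewrite def_P in agree_i.
have F_C F : F \in [set F1; F2] -> F \in C.
  by rewrite -def_P => /(subsetP sPC') /(subsetP sC'C).
apply: (disconnected _ _ lt_ij).
apply: (code_agree_connected codeC (F_C _ (set21 _ _)) (F_C _ (set22 _ _)) neq12).
by rewrite !setIUr (agree_on_pair agree_i) (agree_on_pair agree_j).
Qed.

Theorem lemma3p1 (T : finType) (E : {set {set T}}) (t s : nat)
    (Es : 'I_s -> {set {set T}}) :
  simple_edges E ->
  1 <= t ->
  (forall i, Es i \subset E) ->
  (forall i, #|Es i| <= t) ->
  (forall i j : 'I_s, i < j -> ~ connected_graph (E :\: (Es i :|: Es j))) ->
  (2 ^ t + 1) * 2 ^ (t - 1) < s ->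
  mcode E <= 2 ^ t.
Proof.
move=> _ t_ge1 _ small_Es disconnected s_large.
apply/bigmax_leqP => C codeC.
exact: (conn_code_card_le t_ge1 small_Es disconnected s_large codeC).
Qed.
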